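(* Let $L$ be an infinite set and let $Q$ be either the edgeless cube $Q_L$ or the edged cube $\bar Q_L$. If $\vec\sigma$ is a universally convergent basic sequence and $\vec\tau$ is a basic sequence with $\vec\sigma\sim\vec\tau$, then $\vec\tau$ is universally convergent.
   Context: Let $L$ be an infinite set, $-L=\{-r:r\in L\}$ a disjoint copy of $L$, and $0$ a new element; $L^\dagger=-L\cup\{0\}\cup L$ with $-(-r)=r$, $-0=0$. Adjoin $\pm\infty$ with $-(+\infty)=-\infty$ and set $\bar L^\dagger=L^\dagger\cup\{\pm\infty\}$. Points of $U=(\bar L^\dagger)^3$ have coordinates $x,y,z$. The edgeless cube $Q_L$ is the set of points of $U$ with exactly one coordinate in $\{\pm\infty\}$ (cells). The edged cube $\bar Q_L$ is the set of cells $(p,i)$ with $p\in U$, $i\in\{x,y,z\}$, $p_i\in\{\pm\infty\}$ ($i$ marks the face). For $i\in\{x,y,z\}$, $\alpha\in\bar L^\dagger$, the quarter-turn twist $T_{i,\alpha}$ is the permutation of cells fixing every cell whose point $p$ has $p_i\ne\alpha$ and acting on the others by $T_{x,\alpha}(\alpha,y,z)=(\alpha,-z,y)$, $T_{y,\alpha}(x,\alpha,z)=(z,\alpha,-x)$, $T_{z,\alpha}(x,y,\alpha)=(-y,x,\alpha)$ (in $\bar Q_L$ the marked coordinate is carried along by the rotation). Basic twists are $T,T^2,T^3$ for quarter-turn twists $T$. A basic sequence is a sequence $\langle\sigma_\eta:\eta<\theta\rangle$ of basic twists of ordinal length $\theta$. A labelling is a map $f$ from cells to $X\cup\{\mathrm{NaC}\}$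 for a set $X\not\ni\mathrm{NaC}$; it is legal if it never takes value NaC; a configuration is a labelling with $X$ the six colors red, white, green, orange, yellow, blue. A twist $\sigma$ acts by $(\sigma f)(c)=f(\sigma^{-1}c)$. Applying $\vec\sigma=\langle\sigma_\eta:\eta<\theta\rangle$ to $f_0$ produces $f_{\eta+1}=\sigma_\eta f_\eta$, and for limit $\lambda\le\theta$, $f_\lambda(c)$ is the eventually constant value of $f_\eta(c)$ ($\eta<\lambda$) if it exists and NaC otherwise; the terminal labelling $f_\theta$ is denoted $\vec\sigma f_0$. $\vec\sigma$ is universally convergent if $\vec\sigma\,\mathrm{id}$ is legal, where $\mathrm{id}$ labels each cell by itself. $\vec\sigma\sim\vec\tau$ means $\vec\sigma f=\vec\tau f$ for every configuration $f$. *)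

From Stdlib Require Import List Lia Classical ClassicalEpsilon ClassicalDescription.
Set Implicit Arguments.

Definition infinite (L : Type) : Prop := ~ exists l : list L, forall x : L, In x l.

(** bar L^dagger = -L ∪ {0} ∪ L ∪ {+oo, -oo} *)
Inductive LD (L : Type) : Type :=
| Neg (r : L) | Zero | Pos (r : L) | PInf | NInf.
Arguments Zero {L}. Arguments PInf {L}. Arguments NInf {L}.

Definition ldneg {L} (v : LD L) : LD L :=
  match v with
  | Neg r => Pos r | Zero => Zero | Pos r => Neg r | PInf => NInf | NInf => PInf
  end.

Definition isinf {L} (v : LD L) : bool :=
  match v with PInf | NInf => true | _ => false end.

Lemma isinf_neg {L} (v : LD L) : isinf (ldneg v) = isinf v.
Proof. destruct v; reflexivity. Qed.

Inductive axis := AX | AY | AZ.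

Record pt (L : Type) := Pt { px : LD L; py : LD L; pz : LD L }.

Definition coord {L} (p : pt L) (i : axis) : LD L :=
  match i with AX => px p | AY => py p | AZ => pz p end.

Definition rot {L} (i : axis) (p : pt L) : pt L :=
  match i with
  | AX => Pt (px p) (ldneg (pz p)) (py p)
  | AY => Pt (pz p) (py p) (ldneg (px p))
  | AZ => Pt (ldneg (py p)) (px p) (pz p)
  end.

(** how a marked coordinate j is carried along by the rotation about i *)
Definition rotax (i j : axis) : axis :=
  match i, j with
  | AX, AX => AX | AX, AY => AZ | AX, AZ => AY
  | AY, AX => AZ | AY, AY => AY | AY, AZ => AX
  | AZ, AX => AY | AZ, AY => AX | AZ, AZ => AZ
  end.

Lemma rot_coord {L} (i : axis) (p : pt L) : coord (rot i p) i = coord p i.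
Proof. destruct i; reflexivity. Qed.

Lemma isinf_rotax {L} (i j : axis) (p : pt L) :
  isinf (coord (rot i p) (rotax i j)) = isinf (coord p j).
Proof. destruct i, j; simpl; rewrite ?isinf_neg; reflexivity. Qed.

Definition inf_count {L} (p : pt L) : nat :=
  (if isinf (px p) then 1 else 0) + (if isinf (py p) then 1 else 0)
  + (if isinf (pz p) then 1 else 0).

Lemma inf_count_rot {L} (i : axis) (p : pt L) : inf_count (rot i p) = inf_count p.
Proof.
  destruct p as [a b c]; unfold inf_count; destruct i; simpl; rewrite ?isinf_neg;
  destruct (isinf a), (isinf b), (isinf c); reflexivity.
Qed.

(** Cells of the edgeless cube Q_L: points with exactly one infinite coordinate. *)
Definition qcell (L : Type) : Type := { p : pt L | inf_count p = 1 }.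
(** Cells of the edged cube: (p, i) with p_i infinite. *)
Definition ecell (L : Type) : Type := { c : pt L * axis | isinf (coord (fst c) (snd c)) = true }.

Definition qt_pt {L} (i : axis) (a : LD L) (p : pt L) : pt L :=
  if excluded_middle_informative (coord p i = a) then rot i p else p.

Lemma qt_pt_count {L} i (a : LD L) p : inf_count (qt_pt i a p) = inf_count p.
Proof. unfold qt_pt; destruct excluded_middle_informative; [apply inf_count_rot | reflexivity]. Qed.

Definition qt_q {L} (i : axis) (a : LD L) (c : qcell L) : qcell L :=
  exist _ (qt_pt i a (proj1_sig c))
        (eq_trans (qt_pt_count i a (proj1_sig c)) (proj2_sig c)).

Definition qt_e_raw {L} (i : axis) (a : LD L) (c : pt L * axis) : pt L * axis :=
  if excluded_middle_informative (coord (fst c) i = a)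
  then (rot i (fst c), rotax i (snd c)) else c.

Lemma qt_e_raw_ok {L} i (a : LD L) c :
  isinf (coord (fst (qt_e_raw i a c)) (snd (qt_e_raw i a c))) = isinf (coord (fst c) (snd c)).
Proof. unfold qt_e_raw; destruct excluded_middle_informative; simpl;
  [apply isinf_rotax | reflexivity]. Qed.

Definition qt_e {L} (i : axis) (a : LD L) (c : ecell L) : ecell L :=
  exist _ (qt_e_raw i a (proj1_sig c))
        (eq_trans (qt_e_raw_ok i a (proj1_sig c)) (proj2_sig c)).

Definition cell (L : Type) (edged : bool) : Type :=
  if edged then ecell L else qcell L.

Definition qturn {L} (edged : bool) (i : axis) (a : LD L) : cell L edged -> cell L edged :=
  match edged return cell L edged -> cell L edged with
  | true => qt_e i a
  | false => qt_q i a
  end.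

Inductive pw := P1 | P2 | P3.
Definition pw_nat (k : pw) : nat := match k with P1 => 1 | P2 => 2 | P3 => 3 end.

Record btwist (L : Type) := BT { bt_ax : axis; bt_val : LD L; bt_pow : pw }.

Definition bt_perm {L} (edged : bool) (s : btwist L) : cell L edged -> cell L edged :=
  Nat.iter (pw_nat (bt_pow s)) (qturn edged (bt_ax s) (bt_val s)).

(** its inverse: since T^4 = id, (T^k)^-1 = T^(4-k) *)
Definition bt_perm_inv {L} (edged : bool) (s : btwist L) : cell L edged -> cell L edged :=
  Nat.iter (4 - pw_nat (bt_pow s)) (qturn edged (bt_ax s) (bt_val s)).

(** labellings: cells -> X ∪ {NaC}, with NaC represented by [None] *)
Definition labelling (L : Type) (edged : bool) (X : Type) : Type := cell L edged -> option X.

Definition legal {L edged X} (f : labelling L edged X) : Prop := forall c, f c <> None.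

Definition act {L edged X} (s : btwist L) (f : labelling L edged X) : labelling L edged X :=
  fun c => f (bt_perm_inv edged s c).

(** Ordinal-length sequences: the index set {η : η < θ} is an arbitrary strictly
    well-ordered type (I, lt); stages η ≤ θ are [option I], with [None] = θ. *)
Definition strict_total {I : Type} (lt : I -> I -> Prop) : Prop :=
  (forall a b c, lt a b -> lt b c -> lt a c) /\ (forall a b, lt a b \/ a = b \/ lt b a).

Definition slt {I : Type} (lt : I -> I -> Prop) (s t : option I) : Prop :=
  match s, t with
  | Some a, Some b => lt a b
  | Some _, None => True
  | None, _ => False
  end.

Lemma slt_wf {I : Type} (lt : I -> I -> Prop) (wf : well_founded lt) : well_founded (slt lt).
Proof.
  assert (H : forall a, Acc (slt lt) (Some a)).
  { intro a. induction (wf a) as [a _ IH]. constructor.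
    intros [b|] Hb; simpl in Hb; [apply IH; exact Hb | contradiction]. }
  intros [a|]; [apply H|]. constructor. intros [b|] Hb; [apply H | contradiction].
Qed.

Section Run.
Context {L : Type} (edged : bool) {X : Type}
        {I : Type} (lt : I -> I -> Prop) (wf : well_founded lt)
        (sigma : I -> btwist L) (f0 : labelling L edged X).

Definition run_step (s : option I) (IH : forall t, slt lt t s -> labelling L edged X)
  : labelling L edged X :=
  match excluded_middle_informative
          (exists z, slt lt (Some z) s /\ forall t, ~ (slt lt (Some z) t /\ slt lt t s)) with
  | left H =>
      (* successor stage s = z+1 : f_{z+1} = σ_z f_z *)
      let (z, Hz) := constructive_indefinite_description _ H in
      act (sigma z) (IH (Some z) (proj1 Hz))
  | right _ =>
      match excluded_middle_informative (exists t, slt lt t s) with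
      | right _ => f0   (* stage 0 *)
      | left _ =>       (* limit stage: eventually constant value, else NaC *)
          fun c =>
            match excluded_middle_informative
                    (exists v : option X, exists z (hz : slt lt z s),
                        forall w (hw : slt lt w s), ~ slt lt w z -> IH w hw c = v) with
            | left Hv => proj1_sig (constructive_indefinite_description _ Hv)
            | right _ => None
            end
      end
  end.

Definition run_at : forall s : option I, labelling L edged X :=
  Fix (slt_wf wf) (fun _ => labelling L edged X) run_step.

Definition apply_seq : labelling L edged X := run_at None.
End Run.
Arguments run_at {L} edged {X I} lt wf sigma f0 _ _.
Arguments apply_seq {L} edged {X I} lt wf sigma f0 _.

Definition id_lab (L : Type) (edged : bool) : labelling L edged (cell L edged) :=
  fun c => Some c.

Definition univ_convergent {L : Type} (edged : bool) {I : Type} (lt : I -> I -> Prop)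
  (wf : well_founded lt) (sigma : I -> btwist L) : Prop :=
  legal (apply_seq edged lt wf sigma (id_lab L edged)).

Inductive color := Red | White | Green | Orange | Yellow | Blue.

Definition seq_equiv {L : Type} (edged : bool)
  {I : Type} (ltI : I -> I -> Prop) (wfI : well_founded ltI) (sigma : I -> btwist L)
  {J : Type} (ltJ : J -> J -> Prop) (wfJ : well_founded ltJ) (tau : J -> btwist L) : Prop :=
  forall f : labelling L edged color,
    apply_seq edged ltI wfI sigma f = apply_seq edged ltJ wfJ tau f.

Arguments univ_convergent {L} edged {I} lt wf sigma.
Arguments seq_equiv {L} edged {I} ltI wfI sigma {J} ltJ wfJ tau.

(* Let d be the label that the universally convergent sequence sigma leaves on a
   cell c, starting from the identity labelling.  Colour d red and every other
   cell white.  Running a sequence transports the set of cells carrying a given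
   label in the same way whatever the labelling (at limit stages both sides are
   eventual values), so at every stage a cell is red exactly when the identity
   run puts d on it.  Hence sigma, and therefore tau, colours c red, and so tau
   leaves the legal label d on c. *)

From Stdlib Require Import ClassicalEpsilon ClassicalDescription FunctionalExtensionality.

Lemma run_at_eq {L : Type} (edged : bool) {X I : Type} (lt : I -> I -> Prop)
  (wf : well_founded lt) (sigma : I -> btwist L) (f0 : labelling L edged X) s :
  run_at edged lt wf sigma f0 s =
  run_step lt sigma f0 s (fun t _ => run_at edged lt wf sigma f0 t).
Proof.
  unfold run_at at 1; rewrite Fix_eq; [reflexivity|].
  intros x f g Hfg.
  replace g with f; [reflexivity|].
  apply functional_extensionality_dep; intro y.
  apply functional_extensionality_dep; intro p.
  apply Hfg.
Qed.

Lemma wf_irrefl {I : Type} {lt : I -> I -> Prop} :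
  well_founded lt -> forall a, ~ lt a a.
Proof.
  intros wf a; induction (wf a) as [a _ IH]; intro Haa.
  exact (IH a Haa Haa).
Qed.

Section EventualValues.
Context {I : Type} (lt : I -> I -> Prop) (wf : well_founded lt)
  (HI : strict_total lt) (s : option I).

Lemma eventual_value_unique {Y : Type} (F : forall w, slt lt w s -> Y) {v v' : Y} :
  (exists z (hz : slt lt z s), forall w (hw : slt lt w s), ~ slt lt w z -> F w hw = v) ->
  (exists z (hz : slt lt z s), forall w (hw : slt lt w s), ~ slt lt w z -> F w hw = v') ->
  v = v'.
Proof.
  intros [z [hz Hz]] [z' [hz' Hz']].
  destruct HI as [Htrans Htotal].
  pose proof (wf_irrefl wf) as Hirr.
  destruct z as [a|]; [|destruct s; contradiction].
  destruct z' as [b|]; [|destruct s; contradiction].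
  (* both values are attained at the later of the two thresholds *)
  destruct (Htotal a b) as [Hab|[<-|Hba]].
  - rewrite <- (Hz (Some b) hz'), <- (Hz' (Some b) hz'); [reflexivity| |];
      simpl; intro Hb; [exact (Hirr b Hb) | exact (Hirr b (Htrans _ _ _ Hb Hab))].
  - rewrite <- (Hz (Some a) hz), <- (Hz' (Some a) hz); [reflexivity| |];
      simpl; apply Hirr.
  - rewrite <- (Hz (Some a) hz), <- (Hz' (Some a) hz); [reflexivity| |];
      simpl; intro Ha; [exact (Hirr a (Htrans _ _ _ Ha Hba)) | exact (Hirr a Ha)].
Qed.

Lemma limit_value_eq_Some {Y : Type} (F : forall w, slt lt w s -> option Y) y :
  match excluded_middle_informative
          (exists v : option Y, exists z (hz : slt lt z s),
             forall w (hw : slt lt w s), ~ slt lt w z -> F w hw = v) with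
  | left Hv => proj1_sig (constructive_indefinite_description _ Hv)
  | right _ => None
  end = Some y
  <-> exists z (hz : slt lt z s),
        forall w (hw : slt lt w s), ~ slt lt w z -> F w hw = Some y.
Proof.
  destruct excluded_middle_informative as [Hv|Hnv].
  - destruct (constructive_indefinite_description _ Hv) as [v Hev]; simpl.
    split; [intros ->; exact Hev|].
    intro Hy; exact (eventual_value_unique F Hev Hy).
  - split; [discriminate|].
    intro Hy; exfalso; apply Hnv; exists (Some y); exact Hy.
Qed.

End EventualValues.

Section LevelSets.
Context {L : Type} (edged : bool) {I : Type} (lt : I -> I -> Prop)
  (wf : well_founded lt) (HI : strict_total lt) (sigma : I -> btwist L).

Lemma run_at_level_set {X Y : Type} (f : labelling L edged X) (g : labelling L edged Y)
  (x : X) (y : Y) :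
  (forall c, f c = Some x <-> g c = Some y) ->
  forall s c, run_at edged lt wf sigma f s c = Some x <->
              run_at edged lt wf sigma g s c = Some y.
Proof.
  intros Hfg s; induction s as [s IH] using (well_founded_induction (slt_wf wf)).
  intro c; rewrite !run_at_eq; unfold run_step.
  destruct excluded_middle_informative as [Hsucc|Hnsucc].
  - destruct (constructive_indefinite_description _ Hsucc) as [z [Hz _]].
    apply IH, Hz.
  - destruct excluded_middle_informative as [Hlim|Hzero]; [|apply Hfg].
    rewrite (limit_value_eq_Some lt wf HI s (fun w _ => run_at edged lt wf sigma f w c)),
      (limit_value_eq_Some lt wf HI s (fun w _ => run_at edged lt wf sigma g w c)).
    split; intros [z [hz Hz]]; exists z, hz; intros w hw Hw;
      apply (IH w hw), Hz; assumption.
Qed.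

End LevelSets.

Definition marker {L : Type} {edged : bool} (d : cell L edged) :
  labelling L edged color :=
  fun c => if excluded_middle_informative (c = d) then Some Red else Some White.

Lemma marker_Red_iff {L : Type} {edged : bool} (d c : cell L edged) :
  marker d c = Some Red <-> id_lab L edged c = Some d.
Proof.
  unfold marker, id_lab.
  destruct excluded_middle_informative as [->|Hcd]; split; intro H;
    try reflexivity; try discriminate.
  injection H as ->; contradiction.
Qed.

Lemma apply_seq_id_lab_iff {L : Type} (edged : bool) {I : Type} (lt : I -> I -> Prop)
  (wf : well_founded lt) (HI : strict_total lt) (sigma : I -> btwist L)
  (d c : cell L edged) :
  apply_seq edged lt wf sigma (id_lab L edged) c = Some d <->
  apply_seq edged lt wf sigma (marker d) c = Some Red.
Proof.
  symmetry; apply (run_at_level_set edged lt wf HI sigma), marker_Red_iff.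
Qed.

Theorem lemma3p7 (L : Type) (HL : infinite L) (edged : bool)
  (I : Type) (ltI : I -> I -> Prop) (wfI : well_founded ltI) (HI : strict_total ltI)
  (sigma : I -> btwist L)
  (J : Type) (ltJ : J -> J -> Prop) (wfJ : well_founded ltJ) (HJ : strict_total ltJ)
  (tau : J -> btwist L) :
  univ_convergent edged ltI wfI sigma ->
  seq_equiv edged ltI wfI sigma ltJ wfJ tau ->
  univ_convergent edged ltJ wfJ tau.
Proof.
  intros Hsigma Hequiv c.
  destruct (apply_seq edged ltI wfI sigma (id_lab L edged) c) as [d|] eqn:Hd;
    [|contradiction (Hsigma c)].
  apply (apply_seq_id_lab_iff edged ltI wfI HI sigma) in Hd.
  rewrite Hequiv in Hd.
  apply (apply_seq_id_lab_iff edged ltJ wfJ HJ tau) in Hd.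
  rewrite Hd; discriminate.
Qed.
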